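(* Fix $\alpha\in(0,1)$. Let $I=[a,b]\subset\mathbb{R}$ be a bounded closed interval and let $f^*\in C(I,\mathbb{R})$ be monotone. Then for every $\varepsilon>0$ there exist $L\in\mathbb{N}$ and a leaky-ReLU network $f_L\in\mathcal{N}_1(L)$ of width one such that $|f_L(x)-f^*(x)|\le\varepsilon$ for all $x\in I$.
   Context: Leaky-ReLU: $\sigma_\alpha(x)=\max(\alpha x,x)$. The class $\mathcal{N}_1(L)$ consists of all functions $f_L:\mathbb{R}\to\mathbb{R}$ given by $f_0(x)=w_0x+b_0$, $f_k(x)=w_k\sigma_\alpha(f_{k-1}(x))+b_k$, $k=1,\dots,L$, with arbitrary $w_k,b_k\in\mathbb{R}$. *)

From Stdlib Require Import Reals.
Open Scope R_scope.

Definition leaky_relu (alpha x : R) : R := Rmax (alpha * x) x.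

Fixpoint net (alpha : R) (w b : nat -> R) (k : nat) (x : R) : R :=
  match k with
  | O => w O * x + b O
  | S k' => w k * leaky_relu alpha (net alpha w b k' x) + b k
  end.

Definition in_N1 (alpha : R) (L : nat) (f : R -> R) : Prop :=
  exists w b : nat -> R, forall x, f x = net alpha w b L x.

Definition monotone_on (a b : R) (f : R -> R) : Prop :=
  (forall x y, a <= x -> x <= y -> y <= b -> f x <= f y) \/
  (forall x y, a <= x -> x <= y -> y <= b -> f y <= f x).

Definition continuous_on_I (a b : R) (f : R -> R) : Prop :=
  forall x, a <= x <= b -> forall eps, eps > 0 -> exists delta, delta > 0 /\
    forall y, a <= y <= b -> Rabs (y - x) < delta -> Rabs (f y - f x) < eps.

(* The knees y |-> c - sigma_alpha (c - y) and y |-> c + sigma_alpha (y - c) / alpha are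
   single width-one layers: the identity below c, and of slope alpha resp. 1/alpha above c;
   iterating them gives slopes alpha^N and alpha^-N.  Post-composing a nondecreasing network
   that is affine of small slope theta to the right of a point T with a steep knee at its
   value at T and then a flat knee at a higher level d leaves it unchanged left of T, makes
   it climb steeply to d and then continue with slope theta again.  Starting from a line,
   this builds a nondecreasing staircase over a fine grid that stays just above a
   nondecreasing f^* at the grid points; monotonicity of f^* and uniform continuity bound
   the error on each cell.  Nonincreasing f^* is handled by negation. *)

From Stdlib Require Import Reals Lra Lia.
Open Scope R_scope.

Definition representable (alpha : R) (g : R -> R) : Prop :=
  exists L, in_N1 alpha L g.

Lemma net_ext alpha w b w' b' L x :
  (forall k, (k <= L)%nat -> w k = w' k /\ b k = b' k) ->
  net alpha w b L x = net alpha w' b' L x.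
Proof.
  induction L as [|L IH]; intros H; simpl.
  - destruct (H 0%nat (le_n _)) as [-> ->]; reflexivity.
  - destruct (H (S L) (le_n _)) as [-> ->].
    rewrite IH; [reflexivity|]. intros k Hk; apply H; lia.
Qed.

Definition set_at (k0 : nat) (c : R) (w : nat -> R) : nat -> R :=
  fun k => if Nat.eqb k k0 then c else w k.

Lemma net_set_at_lt alpha w b k0 c c' L x :
  (L < k0)%nat -> net alpha (set_at k0 c w) (set_at k0 c' b) L x = net alpha w b L x.
Proof.
  intros HL; apply net_ext; intros k Hk; unfold set_at.
  rewrite (proj2 (Nat.eqb_neq k k0)) by lia; auto.
Qed.

Lemma representable_ext alpha g g' :
  (forall x, g x = g' x) -> representable alpha g -> representable alpha g'.
Proof. intros E [L [w [b Hg]]]; exists L, w, b; intros x; rewrite <- E; apply Hg. Qed.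

Lemma representable_affine alpha u v : representable alpha (fun x => u * x + v).
Proof. exists 0%nat, (fun _ => u), (fun _ => v); reflexivity. Qed.

Lemma representable_affine_comp alpha g u v :
  representable alpha g -> representable alpha (fun x => u * g x + v).
Proof.
  intros [L [w [b Hg]]].
  exists L, (set_at L (u * w L) w), (set_at L (u * b L + v) b); intros x; rewrite Hg.
  destruct L as [|L]; simpl.
  - unfold set_at; simpl; ring.
  - rewrite net_set_at_lt by lia; unfold set_at; rewrite Nat.eqb_refl; ring.
Qed.

Lemma representable_layer alpha g p q :
  representable alpha g -> representable alpha (fun x => p * leaky_relu alpha (g x) + q).
Proof.
  intros [L [w [b Hg]]].
  exists (S L), (set_at (S L) p w), (set_at (S L) q b); intros x; rewrite Hg; simpl.
  rewrite net_set_at_lt by lia; unfold set_at; rewrite Nat.eqb_refl; reflexivity.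
Qed.

Definition knee (c r y : R) : R := if Rle_dec y c then y else c + r * (y - c).

Lemma knee_below c r y : y <= c -> knee c r y = y.
Proof. intros; unfold knee; destruct (Rle_dec y c); lra. Qed.

Lemma knee_above c r y : c <= y -> knee c r y = c + r * (y - c).
Proof.
  intros; unfold knee; destruct (Rle_dec y c); [replace y with c by lra; ring | auto].
Qed.

Lemma knee_1 c y : knee c 1 y = y.
Proof. unfold knee; destruct (Rle_dec y c); ring. Qed.

Lemma knee_monotone c r y1 y2 : 0 <= r -> y1 <= y2 -> knee c r y1 <= knee c r y2.
Proof.
  intros Hr H; unfold knee; destruct (Rle_dec y1 c), (Rle_dec y2 c); nra.
Qed.

Lemma knee_mul c r1 r2 y : 0 < r1 -> knee c (r1 * r2) y = knee c r2 (knee c r1 y).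
Proof.
  intros H1; destruct (Rle_dec y c).
  - rewrite (knee_below c r1), !knee_below; auto.
  - rewrite (knee_above c r1), (knee_above c (r1 * r2)), knee_above by nra; ring.
Qed.

Lemma representable_knee_pow alpha r :
  0 < r ->
  (forall g c, representable alpha g -> representable alpha (fun x => knee c r (g x))) ->
  forall N g c, representable alpha g -> representable alpha (fun x => knee c (r ^ N) (g x)).
Proof.
  intros Hr Hknee N g c Hg; induction N as [|N IH].
  - apply (representable_ext alpha g); auto; intros x; simpl; rewrite knee_1; auto.
  - apply (representable_ext alpha (fun x => knee c r (knee c (r ^ N) (g x)))); auto.
    intros x; simpl; rewrite Rmult_comm, knee_mul; auto; apply pow_lt; lra.
Qed.

Section LeakyReLU.

Variable alpha : R.
Hypothesis Halpha : 0 < alpha < 1.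

Lemma leaky_relu_nonneg z : 0 <= z -> leaky_relu alpha z = z.
Proof. intros; unfold leaky_relu; apply Rmax_right; nra. Qed.

Lemma leaky_relu_nonpos z : z <= 0 -> leaky_relu alpha z = alpha * z.
Proof. intros; unfold leaky_relu; apply Rmax_left; nra. Qed.

Lemma representable_knee_alpha g c :
  representable alpha g -> representable alpha (fun x => knee c alpha (g x)).
Proof.
  intros Hg.
  apply (representable_ext alpha (fun x => -1 * leaky_relu alpha (-1 * g x + c) + c)).
  - intros x; destruct (Rle_dec (g x) c).
    + rewrite knee_below, leaky_relu_nonneg by lra; ring.
    + rewrite knee_above, leaky_relu_nonpos by lra; ring.
  - apply representable_layer, representable_affine_comp, Hg.
Qed.

Lemma representable_knee_inv_alpha g c :
  representable alpha g -> representable alpha (fun x => knee c (/ alpha) (g x)).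
Proof.
  intros Hg.
  apply (representable_ext alpha (fun x => / alpha * leaky_relu alpha (1 * g x + - c) + c)).
  - intros x; destruct (Rle_dec (g x) c).
    + rewrite knee_below, leaky_relu_nonpos by lra; field; lra.
    + rewrite knee_above, leaky_relu_nonneg by lra; ring.
  - apply representable_layer, representable_affine_comp, Hg.
Qed.

Lemma staircase_step theta h N g T d :
  0 < theta -> 0 < h -> representable alpha g ->
  (forall x, T <= x -> g x = g T + theta * (x - T)) ->
  (forall x, x <= T -> g x <= g T) ->
  g T <= d <= g T + theta * (/ alpha) ^ N * h ->
  exists g', representable alpha g' /\
    (forall x, x <= T -> g' x = g x) /\
    (forall x y, T <= x -> x <= y -> g' x <= g' y) /\
    (forall x, T + h <= x -> g' x = g' (T + h) + theta * (x - (T + h))) /\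
    d <= g' (T + h) <= d + theta * h.
Proof.
  intros Htheta Hh Hg Gright Gleft Hd.
  set (p := g T) in *.
  assert (Hsteep : 0 < (/ alpha) ^ N) by (apply pow_lt, Rinv_0_lt_compat; lra).
  assert (Hflat : 0 < alpha ^ N) by (apply pow_lt; lra).
  set (k := theta * (/ alpha) ^ N) in *.
  assert (Hk : 0 < k) by (unfold k; nra).
  assert (Hk_back : alpha ^ N * k = theta).
  { unfold k; rewrite pow_inv; field; apply pow_nonzero; lra. }
  set (s := T + (d - p) / k).
  assert (Eks : k * (s - T) = d - p) by (unfold s; field; lra).
  assert (Hs : T <= s <= T + h) by (split; nra).
  set (ramp := fun x => knee p ((/ alpha) ^ N) (g x)).
  assert (Hramp : forall x, T <= x -> ramp x = p + k * (x - T)).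
  { intros x Hx; unfold ramp, k; rewrite Gright, knee_above by nra; fold p; ring. }
  exists (fun x => knee d (alpha ^ N) (ramp x)).
  assert (Hafter : forall x, s <= x -> knee d (alpha ^ N) (ramp x) = d + theta * (x - s)).
  { intros x Hx; rewrite Hramp by lra.
    rewrite knee_above by nra; rewrite <- Hk_back; nra. }
  split; [|split; [|split; [|split]]].
  - apply representable_knee_pow; [lra | apply representable_knee_alpha |].
    apply representable_knee_pow; [| apply representable_knee_inv_alpha | exact Hg].
    apply Rinv_0_lt_compat; lra.
  - intros x Hx; assert (g x <= p) by auto.
    unfold ramp; rewrite (knee_below p), knee_below; lra.
  - intros x y Hx Hxy; apply knee_monotone; [lra|].
    rewrite !Hramp by lra; nra.
  - intros x Hx; rewrite !Hafter by lra; ring.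
  - rewrite Hafter by lra; nra.
Qed.

End LeakyReLU.

Section Staircase.

Variables (alpha : R) (f : R -> R) (a h eps theta : R) (N n : nat).
Hypothesis Halpha : 0 < alpha < 1.
Hypothesis Hh : 0 < h.
Hypothesis Htheta : 0 < theta.

Let grid (i : nat) : R := a + INR i * h.

Hypothesis Hf : forall x y, a <= x -> x <= y -> y <= grid n -> f x <= f y.
Hypothesis Hjump : forall i, (i < n)%nat -> f (grid (S i)) - f (grid i) <= eps / 2.
Hypothesis Hbudget : theta * (INR n * h) <= eps / 4.
Hypothesis Hsteep : eps / 2 <= theta * (/ alpha) ^ N * h.

Definition staircase_at (i : nat) (g : R -> R) : Prop :=
  representable alpha g /\
  (forall x, grid i <= x -> g x = g (grid i) + theta * (x - grid i)) /\
  (forall x, x <= grid i -> g x <= g (grid i)) /\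
  f (grid i) <= g (grid i) <= f (grid i) + eps / 4 + INR i * theta * h /\
  (forall x, a <= x <= grid i -> Rabs (g x - f x) <= eps).

Lemma eps_nonneg : 0 <= eps.
Proof.
  assert (0 <= INR n) by apply pos_INR.
  assert (0 <= theta * (INR n * h)) by (apply Rmult_le_pos; nra); lra.
Qed.

Lemma staircase_at_0 : exists g, staircase_at 0 g.
Proof.
  pose proof eps_nonneg.
  exists (fun x => theta * (x - a) + f a); unfold staircase_at, grid; simpl INR.
  rewrite !Rmult_0_l, !Rplus_0_r; split; [|split; [|split; [|split]]].
  - apply (representable_ext alpha (fun x => theta * x + (f a - theta * a))).
    + intros x; ring.
    + apply representable_affine.
  - intros x _; ring.
  - intros x Hx; nra.
  - lra.
  - intros x Hx; replace x with a by lra.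
    replace (theta * (a - a) + f a - f a) with 0 by ring; rewrite Rabs_R0; lra.
Qed.

Lemma staircase_at_S i g :
  (S i <= n)%nat -> staircase_at i g -> exists g', staircase_at (S i) g'.
Proof.
  intros Hi [Hg [Gright [Gleft [Gval Gerr]]]]; unfold staircase_at, grid in *.
  set (T := a + INR i * h) in *.
  assert (Hi0 : 0 <= INR i) by apply pos_INR.
  assert (HiS : INR i + 1 <= INR n) by (rewrite <- S_INR; apply le_INR; lia).
  assert (Hjump_i : f (T + h) - f T <= eps / 2).
  { replace (T + h) with (a + INR (S i) * h) by (unfold T; rewrite S_INR; ring).
    apply Hjump; lia. }
  replace (a + INR (S i) * h) with (T + h) by (unfold T; rewrite S_INR; ring).
  rewrite S_INR.
  assert (HT : a <= T) by (unfold T; nra).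
  assert (Hmono_i : f T <= f (T + h)) by (apply Hf; unfold T in *; nra).
  set (d := Rmax (f (T + h)) (g T)).
  assert (Hd : g T <= d <= g T + theta * (/ alpha) ^ N * h).
  { unfold d; split; [apply Rmax_r | apply Rmax_lub; lra]. }
  destruct (staircase_step alpha Halpha theta h N g T d Htheta Hh Hg Gright Gleft Hd)
    as [g' [Hg' [Eleft [Mono [Eright [Lo Hi']]]]]].
  assert (Hd_lo : f (T + h) <= d) by apply Rmax_l.
  assert (Hd_hi : d <= f (T + h) + eps / 4 + INR i * theta * h)
    by (unfold d; apply Rmax_lub; lra).
  assert (Hstep_budget : (INR i + 1) * theta * h <= eps / 4) by nra.
  assert (Hrise : forall x, T <= x -> g T <= g' x)
    by (intros x Hx; rewrite <- (Eleft T) by lra; apply Mono; lra).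
  exists g'; split; [|split; [|split; [|split]]]; auto.
  - intros x Hx; destruct (Rle_dec x T).
    + rewrite Eleft by auto; assert (g x <= g T) by auto.
      assert (g T <= g' (T + h)) by (apply Hrise; lra); lra.
    + apply Mono; lra.
  - lra.
  - intros x Hx; destruct (Rle_dec x T).
    + rewrite Eleft by auto; apply Gerr; lra.
    + assert (g T <= g' x) by (apply Hrise; lra).
      assert (g' x <= g' (T + h)) by (apply Mono; lra).
      assert (f T <= f x <= f (T + h)) by (split; apply Hf; unfold T in *; nra).
      apply Rabs_le; lra.
Qed.

Lemma staircase i : (i <= n)%nat -> exists g, staircase_at i g.
Proof.
  induction i as [|i IH]; intros Hi; [apply staircase_at_0|].
  destruct (IH ltac:(lia)) as [g Hg]; exact (staircase_at_S i g Hi Hg).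
Qed.

End Staircase.

Lemma continuous_on_I_opp a b f :
  continuous_on_I a b f -> continuous_on_I a b (fun x => - f x).
Proof.
  intros Hc x Hx e He; destruct (Hc x Hx e He) as [d [Hd Hy]]; exists d; split; auto.
  intros y Hy' Hyx; replace (- f y - - f x) with (- (f y - f x)) by ring.
  rewrite Rabs_Ropp; auto.
Qed.

Lemma continuous_on_I_uniform a b f : a <= b -> continuous_on_I a b f ->
  forall e, 0 < e -> exists del, 0 < del /\ forall x y, a <= x <= b -> a <= y <= b ->
    Rabs (x - y) < del -> Rabs (f x - f y) < e.
Proof.
  intros Hab Hc e He.
  set (clamp := fun x => Rmin b (Rmax a x)).
  assert (Hclamp_id : forall x, a <= x <= b -> clamp x = x).
  { intros x Hx; unfold clamp; rewrite Rmax_right by lra; apply Rmin_right; lra. }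
  assert (Hclamp_lip : forall x y, Rabs (clamp x - clamp y) <= Rabs (x - y)).
  { intros x y; unfold clamp, Rmin, Rmax.
    repeat destruct Rle_dec; unfold Rabs; repeat destruct Rcase_abs; lra. }
  (* Heine needs continuity on all of R at the points of [a,b]; clamping supplies it. *)
  assert (HU : uniform_continuity (fun x => f (clamp x)) (fun c => a <= c <= b)).
  { apply Heine; [apply compact_P3|]; intros x Hx eps Heps.
    destruct (Hc x Hx eps Heps) as [del [Hdel Hd]]; exists del; split; auto.
    intros y [_ Hy]; simpl in *; unfold R_dist in *; rewrite (Hclamp_id x Hx).
    apply Hd.
    - unfold clamp; split; [apply Rmin_glb; [lra | apply Rmax_l] | apply Rmin_l].
    - rewrite <- (Hclamp_id x Hx); eapply Rle_lt_trans; [apply Hclamp_lip | auto]. }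
  destruct (HU (mkposreal e He)) as [[del Hdel] Hd]; exists del; split; auto.
  intros x y Hx Hy Hxy; specialize (Hd x y Hx Hy Hxy); simpl in Hd.
  rewrite (Hclamp_id x Hx), (Hclamp_id y Hy) in Hd; exact Hd.
Qed.

Lemma inv_pow_unbounded alpha c : 0 < alpha < 1 -> exists N, c <= (/ alpha) ^ N.
Proof.
  intros Ha.
  assert (Hinv : 1 < / alpha) by (rewrite <- Rinv_1; apply Rinv_lt_contravar; lra).
  destruct (Pow_x_infinity (/ alpha) ltac:(rewrite Rabs_right; lra) c) as [N HN].
  exists N; specialize (HN N (le_n N)).
  rewrite Rabs_right in HN by (left; apply pow_lt; lra); lra.
Qed.

Lemma fine_grid l del : 0 < l -> 0 < del -> exists n, (0 < n)%nat /\ l / INR n < del.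
Proof.
  intros Hl Hdel.
  destruct (archimed_cor1 (del / l)) as [n [Hn_del Hn]]; [apply Rdiv_lt_0_compat; lra|].
  exists n; split; auto.
  apply (Rmult_lt_compat_r l) in Hn_del; [|lra].
  replace (del / l * l) with del in Hn_del by (field; lra).
  replace (l / INR n) with (/ INR n * l) by (field; apply not_0_INR; lia); exact Hn_del.
Qed.

Lemma approx_nondecreasing alpha a b f : 0 < alpha < 1 -> a < b -> continuous_on_I a b f ->
  (forall x y, a <= x -> x <= y -> y <= b -> f x <= f y) ->
  forall eps, 0 < eps ->
  exists g, representable alpha g /\ forall x, a <= x <= b -> Rabs (g x - f x) <= eps.
Proof.
  intros Halpha Hab Hc Hf eps Heps.
  destruct (continuous_on_I_uniform a b f ltac:(lra) Hc (eps / 2) ltac:(lra))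
    as [del [Hdel Hunif]].
  destruct (fine_grid (b - a) del ltac:(lra) Hdel) as [n [Hn Hh_del]].
  assert (HnR : 0 < INR n) by (apply lt_0_INR; auto).
  set (h := (b - a) / INR n) in *.
  assert (Hh : 0 < h) by (apply Rdiv_lt_0_compat; lra).
  assert (Hgrid_end : a + INR n * h = b) by (unfold h; field; lra).
  set (theta := eps / (4 * (b - a))).
  assert (Htheta : 0 < theta) by (apply Rdiv_lt_0_compat; lra).
  destruct (inv_pow_unbounded alpha (eps / (2 * theta * h)) Halpha) as [N HN].
  assert (Hsteep : eps / 2 <= theta * (/ alpha) ^ N * h).
  { replace (eps / 2) with (theta * h * (eps / (2 * theta * h))) by (field; lra).
    replace (theta * (/ alpha) ^ N * h) with (theta * h * (/ alpha) ^ N) by ring.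
    apply Rmult_le_compat_l; [nra | exact HN]. }
  assert (Hbudget : theta * (INR n * h) <= eps / 4).
  { replace (INR n * h) with (b - a) by lra; unfold theta; right; field; lra. }
  assert (Hjump : forall i, (i < n)%nat -> f (a + INR (S i) * h) - f (a + INR i * h) <= eps / 2).
  { intros i Hi; rewrite S_INR.
    assert (0 <= INR i) by apply pos_INR.
    assert (INR i + 1 <= INR n) by (rewrite <- S_INR; apply le_INR; lia).
    assert (Hclose : Rabs (f (a + (INR i + 1) * h) - f (a + INR i * h)) < eps / 2).
    { apply Hunif; try split; try nra.
      replace (a + (INR i + 1) * h - (a + INR i * h)) with h by ring.
      rewrite Rabs_right; lra. }
    apply Rabs_def2 in Hclose; lra. }
  rewrite <- Hgrid_end in Hf.
  destruct (staircase alpha f a h eps theta N n Halpha Hh Htheta Hf Hjump Hbudget Hsteep n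
    (le_n n)) as [g [Hg [_ [_ [_ Herr]]]]].
  exists g; split; auto; intros x Hx; apply Herr; lra.
Qed.

Lemma approx_monotone alpha a b f : 0 < alpha < 1 -> a < b -> continuous_on_I a b f ->
  monotone_on a b f -> forall eps, 0 < eps ->
  exists g, representable alpha g /\ forall x, a <= x <= b -> Rabs (g x - f x) <= eps.
Proof.
  intros Halpha Hab Hc [Hinc | Hdec] eps Heps; [apply approx_nondecreasing; auto|].
  destruct (approx_nondecreasing alpha a b (fun x => - f x) Halpha Hab
              (continuous_on_I_opp a b f Hc)) with eps as [g [Hg Herr]]; auto.
  { intros x y Hx Hxy Hy; specialize (Hdec x y Hx Hxy Hy); lra. }
  exists (fun x => -1 * g x + 0); split; [apply representable_affine_comp, Hg|].
  intros x Hx; replace (-1 * g x + 0 - f x) with (- (g x - - f x)) by ring.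
  rewrite Rabs_Ropp; auto.
Qed.

Theorem mainTheorem2 (alpha : R) (Halpha : 0 < alpha < 1) (a b : R) (Hab : a <= b)
  (fstar : R -> R) (Hcont : continuous_on_I a b fstar) (Hmono : monotone_on a b fstar) :
  forall eps, eps > 0 ->
  exists (L : nat) (fL : R -> R), in_N1 alpha L fL /\
    forall x, a <= x <= b -> Rabs (fL x - fstar x) <= eps.
Proof.
  intros eps Heps.
  destruct Hab as [Hab | <-].
  - destruct (approx_monotone alpha a b fstar Halpha Hab Hcont Hmono eps Heps)
      as [g [[L HL] Herr]].
    exists L, g; auto.
  - exists 0%nat, (fun _ => fstar a); split.
    + exists (fun _ => 0), (fun _ => fstar a); intros x; simpl; ring.
    + intros x Hx; replace x with a by lra.
      replace (fstar a - fstar a) with 0 by ring; rewrite Rabs_R0; lra.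
Qed.
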